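(* Fix $\eta\in[0,1]$ and an integer $N\ge0$. For every policy $P(u^{+}\mid u,q)\in\mathcal P^{L}_{\pi}$ (lower-bound construction of the context), the induced stationary distribution satisfies $$\pi(S=0\mid u,q)=\bar\eta^{\,u+1}\qquad\text{for all } q\in[0:N] \text{ and all } u \text{ in the support of } U \text{ given } Q=q,$$ in particular $\pi_{S\mid U,Q}$ does not depend on the policy.
   Context: $\bar\eta=1-\eta$, $[a:b]=\{a,\dots,b\}$. Binary energy-harvesting battery law: $P(S^{+}=0\mid x,s)=\bar\eta\,\mathbb{1}\{x=s\}$ for $x\le s$, $x,s\in\{0,1\}$. Lower-bound construction: $\mathcal Q=\mathcal U=[0:N]$; $g_L(q,1)=0$ for all $q$, $g_L(q,0)=q+1$ for $q\in[0:N-1]$, $g_L(N,0)=0$; $f(u^{+},s)=s\,\mathbb{1}\{u^{+}=0\}$. A policy $P(u^{+}\mid u,q)$ induces the kernel $T(s^{+},u^{+},q^{+}\mid s,u,q)=\sum_xP(u^{+}\mid u,q)\mathbb{1}\{x=f(u^{+},s)\}\mathbb{1}\{q^{+}=g_L(q,x)\}P(s^{+}\mid x,s)$ on $\{0,1\}\times\mathcal U\times\mathcal Q$. $\mathcal P^{L}_{\pi}$: policies for which $T$ has a unique stationary distribution $\pi(s,u,q)$, such that for $q\in[0:N-1]$ the variable $U$ given $Q=q$ lies in $[0:q]$ and $P(u^{+}\mid u,q)=0$ unless $u^{+}\in\{0,u+1\}$, and for $q=N$, $U$ lies in $[0:N]$ and $P(0\mid u,N)=1$. *)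

From HB Require Import structures.
From mathcomp Require Import all_boot all_order all_algebra.
Set Implicit Arguments. Unset Strict Implicit. Unset Printing Implicit Defensive.
Import Order.TTheory GRing.Theory Num.Theory.
Local Open Scope ring_scope.

(* Joint state (s, u, q) in {0,1} x [0:N] x [0:N]. *)
Definition state (N : nat) := ('I_2 * 'I_N.+1 * 'I_N.+1)%type.

(* Binary battery law: P(S+ = 0 | x, s) = (1 - eta) * 1{x = s} (used for x <= s). *)
Definition battery {R : nzRingType} (eta : R) (x s s' : nat) : R :=
  let p0 := (1 - eta) * (x == s)%:R in
  if s' == 0%N then p0 else 1 - p0.

Definition fL (u' s : nat) : nat := if u' == 0%N then s else 0%N.

Definition gL (N q x : nat) : nat :=
  if x == 0%N then (if (q < N)%N then q.+1 else 0%N) else 0%N.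

(* Policy P(u+ | u, q) is written  P u q u'. *)
Definition policy (R : nzRingType) (N : nat) := 'I_N.+1 -> 'I_N.+1 -> 'I_N.+1 -> R.

Definition is_policy {R : numDomainType} {N : nat} (P : policy R N) : Prop :=
  (forall u q u', 0 <= P u q u') /\ (forall u q, \sum_(u' < N.+1) P u q u' = 1).

(* Induced kernel T(s+,u+,q+ | s,u,q), written kernelT eta P (s,u,q) (s+,u+,q+). *)
Definition kernelT {R : nzRingType} (eta : R) {N : nat} (P : policy R N)
    (z z' : state N) : R :=
  let: (s, u, q) := z in
  let: (s', u', q') := z' in
  \sum_(x < 2) P u q u' * (x == fL u' s :> nat)%:R
                 * (q' == gL N q x :> nat)%:R * battery eta x s s'.

Definition is_stationary {R : numDomainType} {N : nat}
    (T : state N -> state N -> R) (pi : state N -> R) : Prop :=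
  [/\ forall z, 0 <= pi z,
      \sum_(z : state N) pi z = 1
    & forall z', pi z' = \sum_(z : state N) pi z * T z z'].

Definition margUQ {R : nzRingType} {N : nat} (pi : state N -> R) (u q : 'I_N.+1) : R :=
  \sum_(s < 2) pi (s, u, q).

Definition in_PL {R : numDomainType} (eta : R) (N : nat) (P : policy R N)
    (pi : state N -> R) : Prop :=
  [/\ is_policy P,
      is_stationary (kernelT eta P) pi
    & (forall pi', is_stationary (kernelT eta P) pi' -> forall z, pi' z = pi z)] /\
  [/\
      (forall q u : 'I_N.+1, (q < N)%N -> (q < u)%N -> margUQ pi u q = 0),
      (forall q u u' : 'I_N.+1, (q < N)%N -> (u' != 0 :> nat) -> (u' != u.+1 :> nat) ->
         P u q u' = 0)
    &
      (forall u : 'I_N.+1, P u ord_max ord0 = 1)].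

From HB Require Import structures.
From mathcomp Require Import all_boot all_order all_algebra.
From mathcomp Require Import ring.
Import Order.TTheory GRing.Theory Num.Theory.
Local Open Scope ring_scope.

(* For u > 0 the input is x = 0, and by the support constraints of the policy
   (u, q) is entered only from (u - 1, q - 1). Stationarity then multiplies the
   marginal pi(u, q) and the mass pi(0, u, q) by the same transition weight
   P(u | u - 1, q - 1), the latter with the extra factor P(S+ = 0 | 0, s) =
   (1 - eta) 1{s = 0}. At u = 0 the input equals the battery state, so
   pi(0, 0, q) = (1 - eta) pi(0, q). Induction on u gives
   pi(0, u, q) = (1 - eta)^(u+1) pi(u, q), with no positivity needed. *)

Lemma sum_delta (R : nzSemiRingType) (I : finType) (i0 : I) (F : I -> R) :
  \sum_i F i * (i == i0)%:R = F i0.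
Proof.
rewrite (bigD1 i0) //= eqxx mulr1 big1 ?addr0 // => i /negPf->.
by rewrite mulr0.
Qed.

Lemma prob_eq0_off_atom (R : numDomainType) (I : finType) (p : I -> R) (i0 i : I) :
  (forall j, 0 <= p j) -> \sum_j p j = 1 -> p i0 = 1 -> i != i0 -> p i = 0.
Proof.
move=> p_ge0 p_sum1 p_i0 i_neq_i0.
have rest0 : \sum_(j | j != i0) p j = 0.
  by move: p_sum1; rewrite (bigD1 i0) //= p_i0 -{2}[1]addr0 => /addrI.
exact: (psumr_eq0P (fun j _ => p_ge0 j) rest0).
Qed.

Lemma sum_state (R : nzSemiRingType) N (F : state N -> R) :
  \sum_(z : state N) F z = \sum_(s < 2) \sum_(u < N.+1) \sum_(q < N.+1) F (s, u, q).
Proof. by rewrite pair_bigA /= pair_bigA; apply: eq_bigr => -[[]]. Qed.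

Lemma fL0 u' s : u' = 0%N -> fL u' s = s.
Proof. by rewrite /fL => ->. Qed.

Lemma fL_neq0 u' s : u' != 0%N -> fL u' s = 0%N.
Proof. by rewrite /fL => /negPf->. Qed.

Lemma sum_battery (R : nzRingType) (eta : R) x s :
  \sum_(s' < 2) battery eta x s s' = 1.
Proof. by rewrite big_ord_recr big_ord1 /battery /= addrC subrK. Qed.

Lemma battery0 (R : nzRingType) (eta : R) x s :
  battery eta x s 0 = (1 - eta) * (x == s)%:R.
Proof. by []. Qed.

Lemma kernelTE (R : nzRingType) (eta : R) N (P : policy R N) (s s' : 'I_2)
    (u q u' q' : 'I_N.+1) :
  kernelT eta P (s, u, q) (s', u', q') =
  P u q u' * (q' == gL N q (fL u' s) :> nat)%:R * battery eta (fL u' s) s s'.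
Proof.
rewrite /kernelT big_ord_recr big_ord1 /= /fL.
by case: (_ == 0%N); case: s => -[|[|//]] _ /=; rewrite ?mulr1 ?mulr0 ?mul0r ?addr0 ?add0r.
Qed.

Section StationaryConditional.

Variables (R : comNzRingType) (eta : R) (N : nat) (P : policy R N).
Variable pi : state N -> R.
Hypothesis pi_fixed : forall z', pi z' = \sum_(z : state N) pi z * kernelT eta P z z'.

Lemma margUQ_fixed (u' q' : 'I_N.+1) :
  margUQ pi u' q' = \sum_(z : state N)
    pi z * (P z.1.2 z.2 u' * (q' == gL N z.2 (fL u' z.1.1) :> nat)%:R).
Proof.
rewrite /margUQ; under eq_bigr => s' _ do rewrite pi_fixed.
rewrite exchange_big; apply: eq_bigr => -[[s u] q] _.
under eq_bigr => s' _ do rewrite kernelTE mulrA.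
by rewrite /= -mulr_sumr sum_battery mulr1.
Qed.

Lemma pi_s0_u0 (u q : 'I_N.+1) : u = 0 :> nat ->
  pi (ord0, u, q) = (1 - eta) * margUQ pi u q.
Proof.
move=> u0; rewrite pi_fixed margUQ_fixed mulr_sumr; apply: eq_bigr => -[[s u1] q1] _.
by rewrite kernelTE battery0 fL0 // eqxx mulr1; ring.
Qed.

Hypothesis P_max : forall u u' : 'I_N.+1, u' != ord0 -> P u ord_max u' = 0.
Hypothesis P_step : forall q u u' : 'I_N.+1,
  (q < N)%N -> (u' != 0 :> nat) -> (u' != u.+1 :> nat) -> P u q u' = 0.

(* A positive u' forces the input x = 0, which moves q to q + 1 (or resets it at
   q = N, where the policy only plays u' = 0); hence (u', q') is entered only from
   (u' - 1, q' - 1). *)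
Lemma inflowE (u0 q0 u' q' : 'I_N.+1) : u' != 0 :> nat ->
  P u0 q0 u' * (q' == gL N q0 0 :> nat)%:R =
  P u0 q0 u' * (u' == u0.+1 :> nat)%:R * (q' == q0.+1 :> nat)%:R.
Proof.
move=> u'_neq0; rewrite /gL /=; case: ltnP => [q0_lt|q0_ge].
  have [_|u'_neq] := eqVneq (u' : nat) u0.+1; first by rewrite mulr1.
  by rewrite P_step // !mul0r.
have -> : q0 = ord_max by apply/val_inj/eqP; rewrite eqn_leq -ltnS ltn_ord.
by rewrite P_max ?mul0r //; apply: contra u'_neq0 => /eqP->.
Qed.

Lemma pi_inflow (s' : 'I_2) (u' q' : 'I_N.+1) : u' != 0 :> nat ->
  pi (s', u', q') = \sum_(z : state N) pi z *
    (P z.1.2 z.2 u' * (u' == z.1.2.+1 :> nat)%:R * (q' == z.2.+1 :> nat)%:R)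
    * battery eta 0 z.1.1 s'.
Proof.
move=> u'_neq0; rewrite pi_fixed; apply: eq_bigr => -[[s u] q] _.
by rewrite kernelTE fL_neq0 // inflowE // mulrA.
Qed.

Lemma pi_q0 (s' : 'I_2) (u' q' : 'I_N.+1) : u' != 0 :> nat -> q' = 0 :> nat ->
  pi (s', u', q') = 0.
Proof.
move=> u'_neq0 q'0; rewrite pi_inflow // big1 // => z _.
by rewrite q'0 !mulr0 mul0r.
Qed.

Lemma pi_succ (s' : 'I_2) {u q u' q' : 'I_N.+1} : u' = u.+1 :> nat -> q' = q.+1 :> nat ->
  pi (s', u', q') = \sum_(s < 2) pi (s, u, q) * P u q u' * battery eta 0 s s'.
Proof.
move=> u'E q'E; rewrite pi_inflow ?u'E // sum_state; apply: eq_bigr => s _.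
have succE (i j : 'I_N.+1) : (i.+1 == j.+1 :> nat) = (j == i) by rewrite eqSS eq_sym.
under eq_bigr => u0 _ do under eq_bigr => q0 _ do
  rewrite /= q'E !succE [_ * battery _ _ _ _]mulrC !mulrA.
under eq_bigr => u0 _ do rewrite sum_delta.
by rewrite sum_delta; ring.
Qed.

Lemma margUQ_succ {u q u' q' : 'I_N.+1} : u' = u.+1 :> nat -> q' = q.+1 :> nat ->
  margUQ pi u' q' = margUQ pi u q * P u q u'.
Proof.
move=> u'E q'E; rewrite /margUQ.
under eq_bigr => s' _ do rewrite (pi_succ s' u'E q'E).
rewrite exchange_big mulr_suml; apply: eq_bigr => s _.
by rewrite -mulr_sumr sum_battery mulr1.
Qed.

Lemma pi_s0_succ {u q u' q' : 'I_N.+1} : u' = u.+1 :> nat -> q' = q.+1 :> nat ->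
  pi (ord0, u', q') = pi (ord0, u, q) * P u q u' * (1 - eta).
Proof.
move=> u'E q'E; rewrite (pi_succ _ u'E q'E) big_ord_recl big_ord1 /=.
by rewrite !battery0 /= mulr1 mulr0 mulr0 addr0.
Qed.

Lemma pi_s0_margUQ (u q : 'I_N.+1) :
  pi (ord0, u, q) = (1 - eta) ^+ (u : nat).+1 * margUQ pi u q.
Proof.
move: q; case: u => n; elim: n => [|n IHn] n_lt q; first exact: pi_s0_u0.
have n_lt' := ltnW n_lt.
case: q => -[|m] m_lt.
  rewrite pi_q0 // /margUQ big1 ?mulr0 // => s _.
  exact: pi_q0.
rewrite (pi_s0_succ (u := Ordinal n_lt') (q := Ordinal (ltnW m_lt))) //.
rewrite (margUQ_succ (u := Ordinal n_lt') (q := Ordinal (ltnW m_lt))) //.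
by rewrite IHn /= [in RHS]exprS; ring.
Qed.

End StationaryConditional.

Theorem lemma4 (R : realFieldType) (eta : R) (N : nat) (P : policy R N)
    (pi : state N -> R) :
  0 <= eta <= 1 ->
  in_PL eta P pi ->
  forall q u : 'I_N.+1, 0 < margUQ pi u q ->
    pi (ord0, u, q) / margUQ pi u q = (1 - eta) ^+ (u : nat).+1.
Proof.
move=> _ [[[P_ge0 P_sum1] [_ _ pi_fixed] _] [_ P_step P_max0]] q u marg_gt0.
have P_max u0 u' : u' != ord0 -> P u0 ord_max u' = 0.
  exact: prob_eq0_off_atom (P_ge0 u0 ord_max) (P_sum1 u0 ord_max) (P_max0 u0).
by rewrite (@pi_s0_margUQ _ _ _ _ _ pi_fixed P_max P_step) mulfK // gt_eqF.
Qed.
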